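(* Fix $n\ge 1$ and finite sets $\mathsf{AP}^I_L$, $\mathsf{AP}^O$; let $\mathcal{I} = 2^{\mathsf{AP}^I_L\times\{0,\dots,n-1\}}$ and $\mathcal{O} = 2^{\mathsf{AP}^O\times\{0,\dots,n-1\}}$. Let $\tau : \mathcal{I}^*\to\mathcal{O}$ be a computation tree such that for every $t\in\mathcal{I}^*$, $\mathrm{rep}_S(t)$ divides $\mathrm{rep}_S(\tau(t))$ (where $\tau(t)$ is regarded as a word of length one). Then $\tau$ has a unique symmetric completion, and this symmetric completion has the symmetry property. Furthermore, if $\tau$ is regular, then so is its symmetric completion.
   Context: Modulo always returns a value in $\{0,\dots,n-1\}$. For a set $\mathsf{AP}$, $u \subseteq \mathsf{AP}\times\{0,\dots,n-1\}$ and $k\in\mathbb{Z}$, $\mathrm{rot}(u,k) = \{(p,(j+k)\bmod n)\mid (p,j)\in u\}$, extended letterwise to words. For such $x$, $\mathrm{rep}(x) = |\{j\in\{0,\dots,n-1\} \mid \mathrm{rot}(x,j)=x\}|$; for words, $\mathrm{rep}_S(\epsilon) = n$ and $\mathrm{rep}_S(w_0\dots w_l) = \gcd(\mathrm{rep}_S(w_0\dots w_{l-1}),\mathrm{rep}(w_l))$. A computation tree is a map $\tau:\mathcal{I}^*\to\mathcal{O}$; it has the symmetry property if $\tau(\mathrm{rot}(t,i)) = \mathrm{rot}(\tau(t),i)$ for all $t$ and $0\le i<n$; it is regular if the set of subtrees $t\mapsto\tau(\hat t t)$, $\hat t\in\mathcal{I}^*$, is finite. Fix the lexicographic order on $\mathcal{I}^*$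 induced by a total order on $\mathcal{I}$ (the lexicographic order of the tuple representation of letters), and let $\eta_S(t) = \min_{0\le i<n}\mathrm{rot}(t,i)$. A symmetric completion of $\tau$ is a tree $\tau'$ such that for every $t\in\mathcal{I}^*$, $\tau'(t) = \mathrm{rot}(\tau(\eta_S(t)),i)$ for some $i\in\mathbb{N}$ with $\mathrm{rot}(\eta_S(t),i) = t$. *)

From mathcomp Require Import all_boot.
Set Implicit Arguments. Unset Strict Implicit. Unset Printing Implicit Defensive.

Section Defs.
Variable n : nat.

(* (j + k) mod n as an element of {0,..,n-1}; 0 < n follows from j : 'I_n. *)
Definition rot_idx (j : 'I_n) (k : nat) : 'I_n :=
  Ordinal (ltn_pmod (j + k) (leq_ltn_trans (leq0n j) (ltn_ord j))).

Definition letter (A : finType) := {set (A * 'I_n)}.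
Definition word (A : finType) := seq (letter A).

Definition rotl (A : finType) (u : letter A) (k : nat) : letter A :=
  [set (x.1, rot_idx x.2 k) | x in u].

Definition rotw (A : finType) (w : word A) (k : nat) : word A :=
  map (fun u => rotl u k) w.

Definition rep (A : finType) (x : letter A) : nat :=
  #|[set j : 'I_n | rotl x j == x]|.

Definition repS (A : finType) (w : word A) : nat :=
  foldl (fun r x => gcdn r (rep x)) n w.

Fixpoint lexle (T : eqType) (le : rel T) (s1 s2 : seq T) : bool :=
  match s1, s2 with
  | [::], _ => true
  | _ :: _, [::] => false
  | x :: s, y :: t => if x == y then lexle le s t else le x y
  end.

Definition letter_tuple (A : finType) (u : letter A) : seq bool :=
  [seq (x \in u) | x <- enum {: A * 'I_n}].

Definition letter_le (A : finType) : rel (letter A) :=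
  fun u v => lexle (fun a b : bool => a <= b) (letter_tuple u) (letter_tuple v).

Definition word_le (A : finType) : rel (word A) := lexle (@letter_le A).

Definition word_min (A : finType) (w1 w2 : word A) : word A :=
  if word_le w1 w2 then w1 else w2.

Definition etaS (A : finType) (t : word A) : word A :=
  foldr (@word_min A) (rotw t 0) [seq rotw t i | i <- iota 0 n].

Definition ctree (AI AO : finType) := word AI -> letter AO.

Definition symmetry_property (AI AO : finType) (tau : ctree AI AO) : Prop :=
  forall (t : word AI) (i : nat), i < n -> tau (rotw t i) = rotl (tau t) i.

(* regular: finitely many subtrees t |-> tau (th ++ t) *)
Definition regular (AI AO : finType) (tau : ctree AI AO) : Prop :=
  exists (N : nat) (f : 'I_N -> ctree AI AO),
    forall th : word AI, exists k : 'I_N, forall t, tau (th ++ t) = f k t.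

Definition symmetric_completion (AI AO : finType) (tau tau' : ctree AI AO) : Prop :=
  forall t : word AI, exists i : nat,
    rotw (etaS t) i = t /\ tau' t = rotl (tau (etaS t)) i.

End Defs.

From mathcomp Require Import all_boot.
From Stdlib Require Import ClassicalEpsilon.
Set Implicit Arguments. Unset Strict Implicit. Unset Printing Implicit Defensive.

(* Under the divisibility hypothesis, every rotation fixing a word t also fixes
   the letter tau(t): rotating by d fixes a letter x iff n divides rep(x) * d, so
   it fixes every letter of t iff n divides rep_S(t) * d, and rep_S(t) divides
   rep(tau(t)). Hence rot(tau(eta_S(t)), i) does not depend on the choice of i
   with rot(eta_S(t), i) = t, which gives existence and uniqueness; symmetry
   follows because eta_S is invariant under rotation. For regularity,
   eta_S(th t) is eta_S(th) followed by the least rot(t, j) over the rotations j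
   taking th to eta_S(th), so the subtree of the completion at th depends only on
   that set of rotations and on the subtree of tau at eta_S(th). *)

Section Lexicographic.
Variables (T : eqType) (le : rel T).

Lemma lexle_catl p s s' : lexle le (p ++ s) (p ++ s') = lexle le s s'.
Proof. by elim: p => //= x p IH; rewrite eqxx. Qed.

Lemma lexle_catr p p' s s' : size p = size p' ->
  lexle le (p ++ s) (p' ++ s') -> lexle le p p'.
Proof. by elim: p p' => [|x p IH] [|y p'] //= [/IH]; case: (x == y). Qed.

Hypothesis le_anti : forall x y, le x y -> le y x -> x = y.
Hypothesis le_total : forall x y, le x y || le y x.
Hypothesis le_trans : forall x y z, le x y -> le y z -> le x z.

Lemma lexle_anti s t : lexle le s t -> lexle le t s -> s = t.
Proof.
elim: s t => [|x s IH] [|y t] //=; rewrite eq_sym.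
by case: eqVneq => [-> st ts | /eqP Nyx xy yx]; [rewrite (IH t) | case: Nyx; apply: le_anti].
Qed.

Lemma lexle_total s t : lexle le s t || lexle le t s.
Proof. by elim: s t => [|x s IH] [|y t] //=; rewrite eq_sym; case: eqVneq. Qed.

Lemma lexle_trans s1 s2 s3 : lexle le s1 s2 -> lexle le s2 s3 -> lexle le s1 s3.
Proof.
elim: s1 s2 s3 => [|x s1 IH] [|y s2] [|z s3] //=.
case: (eqVneq x y) => [<-|Nxy]; first by case: eqP => // _; apply: IH.
case: (eqVneq y z) => [<-|_]; first by rewrite (negbTE Nxy).
case: (eqVneq x z) => [Exz|_ xy yz]; last exact: le_trans xy yz.
by subst z => xy yx; case/eqP: Nxy; apply: le_anti.
Qed.

Local Notation min := (fun x y => if le x y then x else y).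

Lemma foldr_min_mem x0 s : foldr min x0 s \in x0 :: s.
Proof.
elim: s => [|a s IH] /=; first exact: mem_head.
case: ifP => _; first by rewrite !inE eqxx orbT.
by move: IH; rewrite !inE => /orP [->|->]; rewrite ?orbT.
Qed.

Lemma foldr_min_le x0 s y : y \in x0 :: s -> le (foldr min x0 s) y.
Proof.
have le_refl x : le x x by have := le_total x x; rewrite orbb.
elim: s y => [|a s IH] y; first by rewrite mem_seq1 => /eqP ->.
set m := foldr min x0 s => /=.
have [le_a le_m] : le (min a m) a /\ le (min a m) m.
  by case: ifP => // /negbT Nam; have := le_total a m; rewrite (negbTE Nam).
rewrite !inE => /or3P [/eqP -> | /eqP -> | ys] //.
  by apply: le_trans le_m (IH _ _); apply: mem_head.
by apply: le_trans le_m (IH _ _); rewrite inE ys orbT.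
Qed.

End Lexicographic.

Section Letters.
Variables (n : nat) (A : finType).

Lemma letter_tuple_inj : injective (@letter_tuple n A).
Proof. by move=> u v /eq_in_map uv; apply/setP => x; apply: uv; rewrite mem_enum. Qed.

Let bool_anti (x y : bool) : x <= y -> y <= x -> x = y. Proof. by case: x; case: y. Qed.
Let bool_total (x y : bool) : (x <= y) || (y <= x). Proof. by case: x; case: y. Qed.
Let bool_trans (x y z : bool) : x <= y -> y <= z -> x <= z.
Proof. by case: x; case: y; case: z. Qed.

Lemma letter_le_anti (u v : letter n A) : letter_le u v -> letter_le v u -> u = v.
Proof. by move=> uv vu; apply/letter_tuple_inj/(lexle_anti bool_anti uv vu). Qed.

Lemma letter_le_total (u v : letter n A) : letter_le u v || letter_le v u.
Proof. exact: (lexle_total bool_total). Qed.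

Lemma letter_le_trans (u v w : letter n A) :
  letter_le u v -> letter_le v w -> letter_le u w.
Proof. exact: (lexle_trans bool_anti bool_trans). Qed.

Lemma word_le_anti (u v : word n A) : word_le u v -> word_le v u -> u = v.
Proof. exact: (lexle_anti letter_le_anti). Qed.

Lemma word_le_total (u v : word n A) : word_le u v || word_le v u.
Proof. exact: (lexle_total letter_le_total). Qed.

Lemma word_le_trans (u v w : word n A) : word_le u v -> word_le v w -> word_le u w.
Proof. exact: (lexle_trans letter_le_anti letter_le_trans). Qed.

End Letters.

Section Rotations.
Variables (n : nat) (A : finType).
Implicit Types (u x : letter n A) (w : word n A).

Lemma rotlD u a b : rotl (rotl u a) b = rotl u (a + b).
Proof.
rewrite /rotl -imset_comp; apply: eq_imset => x /=; congr pair.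
by apply: val_inj; rewrite /= modnDml addnA.
Qed.

Lemma rotl_modn u a : rotl u (a %% n) = rotl u a.
Proof. by apply: eq_imset => x; congr pair; apply: val_inj; rewrite /= modnDmr. Qed.

Lemma rotl0 u : rotl u 0 = u.
Proof.
rewrite /rotl -[RHS]imset_id; apply: eq_imset => -[a j]; congr pair.
by apply: val_inj; rewrite /= addn0 modn_small.
Qed.

Lemma rotl_muln u m q : rotl u m = u -> rotl u (q * m) = u.
Proof. by move=> um; elim: q => [|q IH]; rewrite ?rotl0 // mulSn -rotlD um. Qed.

Lemma rotlK u k : 0 < n -> rotl (rotl u k) (n - k %% n) = u.
Proof.
move=> n_gt0; rewrite rotlD -rotl_modn -modnDml subnKC ?modnn ?rotl0 //.
exact/ltnW/ltn_pmod.
Qed.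

Lemma rotwD w a b : rotw (rotw w a) b = rotw w (a + b).
Proof. by rewrite /rotw -map_comp; apply: eq_map => u; rewrite /= rotlD. Qed.

Lemma rotwK w k : 0 < n -> rotw (rotw w k) (n - k %% n) = w.
Proof.
by move=> n_gt0; rewrite /rotw -map_comp (eq_map (fun u => rotlK u k n_gt0)) map_id.
Qed.

Lemma rotw_modn w a : rotw w (a %% n) = rotw w a.
Proof. by apply: eq_map => u; rewrite /= rotl_modn. Qed.

Lemma rotw_cat w1 w2 k : rotw (w1 ++ w2) k = rotw w1 k ++ rotw w2 k.
Proof. exact: map_cat. Qed.

Lemma size_rotw w k : size (rotw w k) = size w.
Proof. exact: size_map. Qed.

Lemma rotw_fixed w d : rotw w d = w -> {in w, forall x, rotl x d = x}.
Proof.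
elim: w => //= y w IH [yd /IH wd] x.
by rewrite inE => /predU1P [->|/wd].
Qed.

End Rotations.

Section Period.
Variables (n : nat) (A : finType).
Hypothesis n_gt0 : 0 < n.
Implicit Types (u : letter n A) (w : word n A).

Lemma rotl_period u :
  exists m, [/\ 0 < m, m %| n & forall j, (rotl u j == u) = (m %| j)].
Proof.
have ex_period : exists m, (0 < m) && (rotl u m == u).
  by exists n; rewrite n_gt0 -rotl_modn modnn rotl0 /=.
case: (ex_minnP ex_period) => m /andP [m_gt0 /eqP um] m_min.
have periodE j : (rotl u j == u) = (m %| j).
  rewrite {1}(divn_eq j m) -rotlD rotl_muln //.
  apply/eqP/idP => [uj | /eqP ->]; last exact: rotl0.
  rewrite /dvdn eqn0Ngt; apply/negP => jm_gt0.
  by have := m_min _ (introT andP (conj jm_gt0 (introT eqP uj))); rewrite leqNgt ltn_pmod.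
by exists m; split; rewrite // -periodE -rotl_modn modnn rotl0.
Qed.

Lemma card_dvdn_ord m : 0 < m -> m %| n -> #|[set j : 'I_n | m %| j]| = n %/ m.
Proof.
move=> m_gt0 dvd_mn.
have mul_lt k : k < n %/ m -> k * m < n by rewrite -{2}(divnK dvd_mn) ltn_pmul2r.
pose mulm (k : 'I_(n %/ m)) : 'I_n := Ordinal (mul_lt _ (ltn_ord k)).
have mulm_inj : injective mulm.
  by move=> k1 k2 /(congr1 val) /eqP; rewrite /= eqn_pmul2r // => /eqP /val_inj.
suff -> : [set j : 'I_n | m %| j] = mulm @: setT.
  by rewrite card_imset // cardsT card_ord.
apply/setP => j; rewrite inE; apply/idP/imsetP => [dvd_mj | [k _ ->]]; last first.
  exact: dvdn_mull.
have lt_jm : j %/ m < n %/ m by rewrite ltn_divLR // divnK.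
by exists (Ordinal lt_jm) => //; apply: val_inj; rewrite /= divnK.
Qed.

Lemma rotl_fixedE u d : (rotl u d == u) = (n %| rep u * d).
Proof.
have [m [m_gt0 dvd_mn periodE]] := rotl_period u.
have -> : rep u = n %/ m.
  by rewrite /rep -(card_dvdn_ord m_gt0 dvd_mn); apply: eq_card => j; rewrite !inE periodE.
have nm_gt0 : 0 < n %/ m by rewrite divn_gt0 // dvdn_leq.
by rewrite periodE -{1}[n](divnK dvd_mn) dvdn_pmul2l.
Qed.

Lemma dvdn_repS_fixed w d : {in w, forall x, rotl x d = x} -> n %| repS w * d.
Proof.
rewrite /repS; set step := fun r x => gcdn r (rep x).
suff acc r : {in w, forall x, rotl x d = x} -> n %| r * d -> n %| foldl step r w * d.
  by move=> wd; apply: acc wd (dvdn_mulr d (dvdnn n)).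
elim: w r => //= x w IH r wd rd.
apply: IH => [y yw | ]; first by apply: wd; rewrite inE yw orbT.
by rewrite /step muln_gcdl dvdn_gcd rd -rotl_fixedE; apply/eqP/wd/mem_head.
Qed.

End Period.

Section CanonicalRotation.
Variables (n : nat) (A : finType).
Hypothesis n_gt0 : 0 < n.
Implicit Types (t th : word n A).

Lemma exists_rotw_etaS t : exists j : 'I_n, rotw t j = etaS t.
Proof.
have : etaS t \in rotw t 0 :: [seq rotw t i | i <- iota 0 n] := foldr_min_mem _ _ _.
rewrite inE => /predU1P [-> | /mapP [i]]; first by exists (Ordinal n_gt0).
by rewrite mem_iota add0n => /andP [_ lt_in] ->; exists (Ordinal lt_in).
Qed.

Lemma etaS_le t i : word_le (etaS t) (rotw t i).
Proof.
rewrite -rotw_modn; apply: (foldr_min_le (@word_le_total n A) (@word_le_trans n A)).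
by rewrite inE; apply/predU1P; right; apply/mapP; exists (i %% n); rewrite ?mem_iota ?ltn_pmod.
Qed.

Lemma etaS_rotw t k : etaS (rotw t k) = etaS t.
Proof.
have [j jE] := exists_rotw_etaS t; have [j' j'E] := exists_rotw_etaS (rotw t k).
apply: word_le_anti; last by rewrite -j'E rotwD etaS_le.
have -> : etaS t = rotw (rotw t k) (n - k %% n + j) by rewrite -rotwD rotwK.
exact: etaS_le.
Qed.

Lemma rotw_catl_etaS th t j :
  rotw (th ++ t) j = etaS (th ++ t) -> rotw th j = etaS th.
Proof.
move=> jE; have [i iE] := exists_rotw_etaS th.
apply: word_le_anti; last exact: etaS_le.
have := etaS_le (th ++ t) i; rewrite -jE !rotw_cat -iE.
by apply: lexle_catr; rewrite !size_rotw.
Qed.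

Definition etaS_rots t : {set 'I_n} := [set j : 'I_n | rotw t j == etaS t].

Lemma etaS_rots_cat th t : etaS_rots (th ++ t) =
  [set j in etaS_rots th | [forall j' in etaS_rots th, word_le (rotw t j) (rotw t j')]].
Proof.
have catE k : rotw th k = etaS th -> rotw (th ++ t) k = etaS th ++ rotw t k.
  by rewrite rotw_cat => ->.
apply/setP => j; rewrite !inE; apply/eqP/andP => [jE | [/eqP jth /forall_inP jmin]].
  have jth := rotw_catl_etaS jE; split; first exact/eqP.
  apply/forall_inP => j'; rewrite inE => /eqP j'th.
  by have := etaS_le (th ++ t) j'; rewrite -jE !catE // /word_le lexle_catl.
have [j0 j0E] := exists_rotw_etaS (th ++ t); have j0th := rotw_catl_etaS j0E.
apply: word_le_anti; last exact: etaS_le.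
rewrite -j0E !catE // /word_le lexle_catl.
by apply: jmin; rewrite inE j0th.
Qed.

End CanonicalRotation.

Lemma regular_of_finite_key (n : nat) (AI AO : finType) (tau : ctree n AI AO)
    (K : finType) (key : word n AI -> K -> Prop) :
  (forall th, exists k, key th k) ->
  (forall th1 th2 k, key th1 k -> key th2 k -> forall t, tau (th1 ++ t) = tau (th2 ++ t)) ->
  regular tau.
Proof.
move=> key_ex key_subtree.
pose repr k := epsilon (inhabits [::]) (key^~ k).
exists #|K|, (fun i t => tau (repr (enum_val i) ++ t)) => th.
have [k thk] := key_ex th; exists (enum_rank k) => t; rewrite enum_rankK.
have reprk : key (repr k) k by apply: (epsilon_spec (inhabits [::]) (key^~ k)); exists th.
exact: key_subtree thk reprk t.
Qed.

Section Completion.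
Variables (n : nat) (API APO : finType).
Hypothesis n_gt0 : 0 < n.
Variable tau : ctree n API APO.

Lemma symmetric_completion_exists : exists tau', symmetric_completion tau tau'.
Proof.
have back_ex (t : word n API) : exists i, rotw (etaS t) i == t.
  by have [j <-] := exists_rotw_etaS n_gt0 t; exists (n - j %% n); rewrite rotwK.
exists (fun t => rotl (tau (etaS t)) (ex_minn (back_ex t))) => t.
by case: ex_minnP => i /eqP iE _; exists i.
Qed.

Hypothesis tau_repS : forall t, repS t %| repS [:: tau t].

Lemma rotl_tau_fixed w d : rotw w d = w -> rotl (tau w) d = tau w.
Proof.
move/rotw_fixed/(dvdn_repS_fixed n_gt0) => dvd_n.
apply/eqP; rewrite (rotl_fixedE n_gt0); apply: dvdn_trans dvd_n _.
by rewrite dvdn_mul // (dvdn_trans (tau_repS w)) // dvdn_gcdr.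
Qed.

Lemma rotl_tau_congr w a b : rotw w a = rotw w b -> rotl (tau w) a = rotl (tau w) b.
Proof.
move=> ab; have fix_w : rotw w (a + (n - b %% n)) = w by rewrite -rotwD ab rotwK.
by rewrite -[in RHS](rotl_tau_fixed fix_w) rotlD addnAC -!rotlD rotlK.
Qed.

Variable tau' : ctree n API APO.
Hypothesis tau'_compl : symmetric_completion tau tau'.

Lemma symmetric_completionE t j :
  rotw t j = etaS t -> tau' t = rotl (tau (etaS t)) (n - j %% n).
Proof.
have [i [it ->]] := tau'_compl t.
by move=> jE; apply: rotl_tau_congr; rewrite it -jE rotwK.
Qed.

Lemma symmetric_completion_sym : symmetry_property tau'.
Proof.
move=> t k _; have [i [it ->]] := tau'_compl t.
have [i' []] := tau'_compl (rotw t k); rewrite etaS_rotw // => i'E ->.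
by rewrite rotlD; apply: rotl_tau_congr; rewrite i'E -rotwD it.
Qed.

Lemma symmetric_completion_subtree th1 th2 :
  etaS_rots th1 = etaS_rots th2 ->
  (forall s, tau (etaS th1 ++ s) = tau (etaS th2 ++ s)) ->
  forall t, tau' (th1 ++ t) = tau' (th2 ++ t).
Proof.
move=> rots12 subtree12 t.
have [j jE] := exists_rotw_etaS n_gt0 (th1 ++ t).
have tau'E th : j \in etaS_rots (th ++ t) ->
    tau' (th ++ t) = rotl (tau (etaS th ++ rotw t j)) (n - j %% n).
  rewrite inE => /eqP jE'.
  by rewrite (symmetric_completionE jE') -jE' rotw_cat (rotw_catl_etaS n_gt0 jE').
have j1 : j \in etaS_rots (th1 ++ t) by rewrite inE jE.
have j2 : j \in etaS_rots (th2 ++ t) by rewrite etaS_rots_cat // -rots12 -etaS_rots_cat.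
by rewrite !tau'E // subtree12.
Qed.

End Completion.

Theorem lemma8 (API APO : finType) (n : nat) (Hn : 0 < n)
    (tau : ctree n API APO) :
  (forall t : word n API, repS t %| repS [:: tau t]) ->
  (exists tau' : ctree n API APO, symmetric_completion tau tau')
  /\ (forall tau1 tau2 : ctree n API APO,
        symmetric_completion tau tau1 -> symmetric_completion tau tau2 ->
        forall t, tau1 t = tau2 t)
  /\ (forall tau' : ctree n API APO,
        symmetric_completion tau tau' -> symmetry_property tau')
  /\ (regular tau -> forall tau' : ctree n API APO,
        symmetric_completion tau tau' -> regular tau').
Proof.
move=> tau_repS; split; [|split; [|split]].
- exact: symmetric_completion_exists.
- move=> tau1 tau2 compl1 compl2 t; have [j jE] := exists_rotw_etaS Hn t.
  by rewrite !(symmetric_completionE Hn tau_repS _ jE).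
- by move=> tau' compl; apply: symmetric_completion_sym.
move=> [N [f tau_reg]] tau' compl.
pose key th (k : {set 'I_n} * 'I_N) :=
  etaS_rots th = k.1 /\ forall s, tau (etaS th ++ s) = f k.2 s.
apply: (regular_of_finite_key (key := key)) => [th | th1 th2 k [r1 s1] [r2 s2]].
  by have [k subtree] := tau_reg (etaS th); exists (etaS_rots th, k).
apply: (symmetric_completion_subtree Hn tau_repS compl) => [|s]; first by rewrite r1 r2.
by rewrite s1 s2.
Qed.
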